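(* Let $x_j\to x_0$ in $\mathbb{T}^1$ and $y_j\to y_0$ with $y_j,y_0\in[0,1]$ (convergence in $\mathbb{R}$). Then for every integer $n\ge0$, $$\mu^n_{x_0}[0,y_0)\le\liminf_{j\to\infty}\mu^n_{x_j}[0,y_j]\le\limsup_{j\to\infty}\mu^n_{x_j}[0,y_j]\le\mu^n_{x_0}[0,y_0],$$ and $$\mu_{x_0}[0,y_0)\le\liminf_{j\to\infty}\mu_{x_j}[0,y_j]\le\limsup_{j\to\infty}\mu_{x_j}[0,y_j]\le\mu_{x_0}[0,y_0].$$ In particular, if $(x,y)\mapsto\mu_x[0,y]$ is discontinuous at $(x_0,y_0)$ then $\mu_{x_0}(\{y_0\})>0$.
   Context: Notation: $\mathbb{T}^1=\mathbb{R}/\mathbb{Z}$, $\mathbb{T}^2=\mathbb{T}^1\times\mathbb{T}^1$, $\lambda$ is Lebesgue probability measure on $\mathbb{T}^1$. For reals $a\le b\le a+1$, $[a,b]$ (resp. $[a,b)$) denotes the image in $\mathbb{T}^1$ of the real interval $[a,b]$ (resp. $[a,b)$); so $[0,1]=\mathbb{T}^1$, $[0,0]=\{0\}$. $P(x,y)=(x+\tfrac12,1-y)$ on $\mathbb{T}^2$. Standing setup: $\alpha$ is irrational, $R(x)=x+\alpha$ on $\mathbb{T}^1$. $r:\mathbb{T}^1\to\mathbb{R}$ is continuous with $r(x+\tfrac12)=-r(x)$, $r(0)=r(\tfrac12)=0$, $0<r(x)<\tfrac14$ for $x\in(0,\tfrac12)$, and such that $S(x,y)=(x+\alpha,\,y+r(x))$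 is a minimal homeomorphism of $\mathbb{T}^2$. Put $\sigma_x(y)=y+r(x)$, $\sigma_x^0=\mathrm{id}$, $\sigma^n_x=\sigma_{R^{n-1}(x)}\circ\cdots\circ\sigma_{R(x)}\circ\sigma_x$ ($n\ge1$), so $S^n(x,y)=(R^n(x),\sigma^n_x(y))$. Fix $x_1^*\in(0.1,0.2)\cap\mathbb{Q}$, $x_2^*=x_1^*+\tfrac12$, $y_1^*\in\mathbb{T}^1$, $y_2^*=1-y_1^*$, $z_j^*=(x_j^*,y_j^* )$, such that for all $m\in\mathbb{Z}$ and $j=1,2$ the second coordinate $Y$ of $S^m(z_j^* )$ satisfies $Y\neq0$ and $Y\ne -r(R^m(x_j^* ))$. Fix $\bar x_1<x_1^*<\bar x_2$ with $[\bar x_1,\bar x_2]\subset(0,\tfrac12)$ and continuous $\tilde\psi,\tilde\phi:[\bar x_1,\bar x_2]\to[0,1]$ with $\tilde\psi(\bar x_1)=0$, $\tilde\phi(\bar x_1)=1$, $\tilde\psi(\bar x_2)=1$, $\tilde\phi(\bar x_2)=0$, $\tilde\psi<\tilde\phi$ on $[\bar x_1,x_1^* )$, $\tilde\psi>\tilde\phi$ on $(x_1^*,\bar x_2]$, and $\tilde\psi(x_1^* )=\tilde\phi(x_1^* )\equiv y_1^*\pmod 1$. Define Borel probability measures $\mu_x^0$ on $\mathbb{T}^1$: $\mu^0_x=\lambda$ if $x\notin(\bar x_1,\bar x_2)\cup(\bar x_1+\tfrac12,\bar x_2+\tfrac12)$; $\mu^0_{x_j^*}=\delta_{y_j^*}$;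 for $x\in(\bar x_1,\bar x_2)\setminus\{x_1^*\}$, $\mu^0_x(A)=\lambda(A\cap I_x)/|\tilde\phi(x)-\tilde\psi(x)|$ where $I_x$ is the image in $\mathbb{T}^1$ of the real interval with endpoints $\tilde\psi(x),\tilde\phi(x)$; for $x=u+\tfrac12$ with $u\in(\bar x_1,\bar x_2)\setminus\{x_1^*\}$, $\mu^0_x(A)=\mu^0_u(\{1-y:y\in A\})$. For $n\ge0$ let $\mu^n_x(A)=\mu^0_{R^n(x)}(\sigma^n_x(A))$, and $\mu_x=\tfrac12\big(\lambda+\sum_{n\ge0}2^{-n-1}\mu^n_x\big)$. *)

From Stdlib Require Import Reals Lra ClassicalEpsilon.
Open Scope R_scope.

(* ---------- the circle T^1 = R/Z, points represented by reals ---------- *)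
Definition frac (z : R) : R := z - IZR (Int_part z).
Definition distT (a b : R) : R := Rmin (frac (a - b)) (1 - frac (a - b)).

Definition S_map (al : R) (r : R -> R) (p : R * R) : R * R :=
  (fst p + al, snd p + r (fst p)).
Definition S_inv (al : R) (r : R -> R) (p : R * R) : R * R :=
  (fst p - al, snd p - r (fst p - al)).
Definition S_iter (al : R) (r : R -> R) (m : Z) (p : R * R) : R * R :=
  match m with
  | Z0 => p
  | Zpos k => Nat.iter (Pos.to_nat k) (S_map al r) p
  | Zneg k => Nat.iter (Pos.to_nat k) (S_inv al r) p
  end.
Definition sigma (al : R) (r : R -> R) (n : nat) (x y : R) : R :=
  snd (Nat.iter n (S_map al r) (x, y)).

(* ---------- arcs of T^1 ----------
   Arc lo hi lc rc is the image in T^1 of the real interval from lo to hi,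
   closed at lo iff lc, closed at hi iff rc (always used with lo <= hi <= lo+1). *)
Record arc := Arc { a_lo : R; a_hi : R; a_lc : bool; a_rc : bool }.
Definition cc (a b : R) : arc := Arc a b true true.
Definition co (a b : R) : arc := Arc a b true false.

Definition in_arc (A : arc) (p : R) : Prop :=
  exists k : Z,
    (if a_lc A then a_lo A <= p + IZR k else a_lo A < p + IZR k) /\
    (if a_rc A then p + IZR k <= a_hi A else p + IZR k < a_hi A).

Definition shift (c : R) (A : arc) : arc :=
  Arc (a_lo A + c) (a_hi A + c) (a_lc A) (a_rc A).
Definition refl (A : arc) : arc :=
  Arc (1 - a_hi A) (1 - a_lo A) (a_rc A) (a_lc A).

Definition lam (A : arc) : R := a_hi A - a_lo A.
Definition ov (a b c d : R) : R := Rmax 0 (Rmin b d - Rmax a c).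
(* lambda(A ∩ I), I = image in T^1 of the real interval [c,d], 0<=c<=d<=1 *)
Definition lam_int (A : arc) (c d : R) : R :=
  let lo' := frac (a_lo A) in
  let hi' := a_hi A - a_lo A + lo' in
  ov lo' hi' c d + ov (lo' - 1) (hi' - 1) c d.

Definition dirac (y : R) (A : arc) : R :=
  if excluded_middle_informative (in_arc A y) then 1 else 0.

Definition Rin_open (a b z : R) : bool :=
  if Rlt_dec a z then (if Rlt_dec z b then true else false) else false.
Definition Req_b (a b : R) : bool := if Req_EM_T a b then true else false.

Definition mu0 (xb1 xb2 x1s y1s : R) (psi phi : R -> R) (x : R) (A : arc) : R :=
  let xr := frac x in
  let onI (u : R) (B : arc) :=
    lam_int B (Rmin (psi u) (phi u)) (Rmax (psi u) (phi u)) / Rabs (phi u - psi u) in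
  if Rin_open xb1 xb2 xr then
    (if Req_b xr x1s then dirac y1s A else onI xr A)
  else if Rin_open (xb1 + 1/2) (xb2 + 1/2) xr then
    (let u := xr - 1/2 in
     if Req_b u x1s then dirac (1 - y1s) A   (* x = x2*, y2* = 1 - y1* *)
     else onI u (refl A))
  else lam A.

(* mu^n_x(A) = mu^0_{R^n x}(sigma^n_x(A));  sigma^n_x is the translation
   by sigma^n_x(0). *)
Definition mun (al : R) (r : R -> R) (xb1 xb2 x1s y1s : R) (psi phi : R -> R)
    (n : nat) (x : R) (A : arc) : R :=
  mu0 xb1 xb2 x1s y1s psi phi (x + INR n * al) (shift (sigma al r n x 0) A).

Definition series (s : nat -> R) : R := epsilon (inhabits 0) (fun l => infinite_sum s l).

Definition mu (al : R) (r : R -> R) (xb1 xb2 x1s y1s : R) (psi phi : R -> R)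
    (x : R) (A : arc) : R :=
  / 2 * (lam A + series (fun n => (/ 2) ^ (S n) * mun al r xb1 xb2 x1s y1s psi phi n x A)).

Definition cont_on (a b : R) (f : R -> R) : Prop :=
  forall x, a <= x <= b -> forall eps, eps > 0 -> exists del, del > 0 /\
    forall x', a <= x' <= b -> Rabs (x' - x) < del -> Rabs (f x' - f x) < eps.

Definition liminf_ge (u : nat -> R) (a : R) : Prop :=
  forall eps, eps > 0 -> exists N, forall j, (j >= N)%nat -> a - eps <= u j.
Definition limsup_le (u : nat -> R) (b : R) : Prop :=
  forall eps, eps > 0 -> exists N, forall j, (j >= N)%nat -> u j <= b + eps.
Definition liminf_le_limsup (u : nat -> R) : Prop :=
  forall a b, a > b -> ~ (liminf_ge u a /\ limsup_le u b).

Definition cvT (xs : nat -> R) (x0 : R) : Prop :=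
  forall eps, eps > 0 -> exists N, forall j, (j >= N)%nat -> distT (xs j) x0 < eps.

Definition cont2_at (F : R -> R -> R) (x0 y0 : R) : Prop :=
  forall eps, eps > 0 -> exists del, del > 0 /\
    forall x y, 0 <= y <= 1 -> distT x x0 < del -> Rabs (y - y0) < del ->
      Rabs (F x y - F x0 y0) < eps.

From Pilot Require Import Defs.
From Stdlib Require Import Reals Lra Lia ClassicalEpsilon Classical.
Open Scope R_scope.

(* Since mu^n_x[0,y] = mu^0_{x + n alpha}[s, s + y] with s = sigma^n_x(0) depending
   continuously on x, it suffices to understand mu^0. Away from x*_1, x*_2 the measure mu^0_t
   is the normalised Lebesgue measure on the interval I_t, whose endpoints move continuously
   and stay apart, so mu^0_t(arc) is continuous in t and in the arc. At x*_1 the intervals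
   I_t shrink to the point y*_1 and mu^0 jumps to the Dirac mass there: a closed arc missing
   y*_1 eventually misses I_t, an open arc containing y*_1 eventually contains I_t (x*_2 is
   the mirror image under P). This gives the closed-arc upper bound and the open-arc lower
   bound; the left endpoint of the arc is never a lift of y*_j by the orbit condition, so
   the lower bound holds for [0, y0). The weights 2^-(n+1) make the bounds pass to mu, and
   mu_x[0,y] <= mu_x[0,y) + mu_x{y} turns them into continuity wherever mu_x has no atom
   at y. *)

Ltac unfold_minmax := unfold ov, Rmax, Rmin in *; repeat match goal with
  | |- context [Rle_dec ?a ?b] => destruct (Rle_dec a b)
  | H : context [Rle_dec ?a ?b] |- _ => destruct (Rle_dec a b) end.

Lemma Rabs_lt_iff (x y : R) : Rabs x < y <-> - y < x < y.
Proof. unfold Rabs; destruct (Rcase_abs x); split; intros; lra. Qed.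

Lemma Rdiv_in_unit a b : 0 < b -> 0 <= a <= b -> 0 <= a / b <= 1.
Proof.
  intros Hb Ha; split.
  - apply Rmult_le_pos; [lra | apply Rlt_le, Rinv_0_lt_compat; lra].
  - apply (Rmult_le_reg_r b); [lra|]; unfold Rdiv; rewrite Rmult_assoc, Rinv_l; lra.
Qed.

Definition eventually (P : nat -> Prop) : Prop :=
  exists N, forall j, (j >= N)%nat -> P j.

Lemma eventually_and (P Q : nat -> Prop) :
  eventually P -> eventually Q -> eventually (fun j => P j /\ Q j).
Proof.
  intros [N1 H1] [N2 H2]; exists (max N1 N2); intros j Hj.
  split; [apply H1 | apply H2]; lia.
Qed.

Lemma eventually_mono (P Q : nat -> Prop) :
  (forall j, P j -> Q j) -> eventually P -> eventually Q.
Proof. intros HPQ [N HN]; exists N; auto. Qed.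

Lemma eventually_always (P : nat -> Prop) : (forall j, P j) -> eventually P.
Proof. intros HP; exists 0%nat; auto. Qed.

Lemma Un_cv_near (u : nat -> R) l d :
  Un_cv u l -> d > 0 -> eventually (fun j => Rabs (u j - l) < d).
Proof. intros Hu Hd; destruct (Hu d Hd) as [N HN]; exists N; apply HN. Qed.

Lemma Un_cv_lt (u v : nat -> R) a b :
  Un_cv u a -> Un_cv v b -> a < b -> eventually (fun j => u j < v j).
Proof.
  intros Hu Hv Hab; set (d := (b - a) / 2).
  apply (eventually_mono (fun j => Rabs (u j - a) < d /\ Rabs (v j - b) < d)).
  - intros j; rewrite !Rabs_lt_iff; unfold d; lra.
  - apply eventually_and; apply Un_cv_near; auto; unfold d; lra.
Qed.

Lemma Un_cv_const c : Un_cv (fun _ => c) c.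
Proof. intros e He; exists 0%nat; intros; unfold Rdist; rewrite Rminus_diag, Rabs_R0; lra. Qed.

Lemma Un_cv_eventually_eq (u v : nat -> R) l :
  eventually (fun j => u j = v j) -> Un_cv v l -> Un_cv u l.
Proof.
  intros [N1 H1] Hv e He; destruct (Hv e He) as [N2 H2].
  exists (max N1 N2); intros j Hj; rewrite H1 by lia; apply H2; lia.
Qed.

Lemma Rmin_Rabs a b : Rmin a b = / 2 * (a + b - Rabs (a - b)).
Proof. unfold Rmin, Rabs; destruct Rle_dec, Rcase_abs; lra. Qed.

Lemma Rmax_Rabs a b : Rmax a b = / 2 * (a + b + Rabs (a - b)).
Proof. unfold Rmax, Rabs; destruct Rle_dec, Rcase_abs; lra. Qed.

Lemma Un_cv_Rmin (u v : nat -> R) a b :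
  Un_cv u a -> Un_cv v b -> Un_cv (fun j => Rmin (u j) (v j)) (Rmin a b).
Proof.
  intros Hu Hv; rewrite Rmin_Rabs.
  apply (Un_cv_eventually_eq _ (fun j => / 2 * (u j + v j - Rabs (u j - v j)))).
  { apply eventually_always; intros j; apply Rmin_Rabs. }
  apply CV_mult; [apply Un_cv_const|].
  apply CV_minus; [apply CV_plus; auto|apply cv_cvabs, CV_minus; auto].
Qed.

Lemma Un_cv_Rmax (u v : nat -> R) a b :
  Un_cv u a -> Un_cv v b -> Un_cv (fun j => Rmax (u j) (v j)) (Rmax a b).
Proof.
  intros Hu Hv; rewrite Rmax_Rabs.
  apply (Un_cv_eventually_eq _ (fun j => / 2 * (u j + v j + Rabs (u j - v j)))).
  { apply eventually_always; intros j; apply Rmax_Rabs. }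
  apply CV_mult; [apply Un_cv_const|].
  apply CV_plus; [apply CV_plus; auto|apply cv_cvabs, CV_minus; auto].
Qed.

Lemma Un_cv_Rinv (u : nat -> R) l : Un_cv u l -> l <> 0 -> Un_cv (fun j => / u j) (/ l).
Proof.
  intros Hu Hl; apply (continuity_seq (/ id)%F); auto.
  apply continuity_pt_inv; auto.
  exact (derivable_continuous_pt _ _ (derivable_pt_id l)).
Qed.

Definition squeezed (u : nat -> R) (a b : R) : Prop :=
  forall eps, eps > 0 -> eventually (fun j => a - eps <= u j <= b + eps).

Lemma squeezed_of_Un_cv (u : nat -> R) l : Un_cv u l -> squeezed u l l.
Proof.
  intros Hu eps Heps.
  apply (eventually_mono (fun j => Rabs (u j - l) < eps)); [|apply Un_cv_near; auto].
  intros j; rewrite Rabs_lt_iff; lra.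
Qed.

Lemma squeezed_eventually_eq (u v : nat -> R) a b :
  eventually (fun j => u j = v j) -> squeezed v a b -> squeezed u a b.
Proof.
  intros Huv Hv eps Heps.
  refine (eventually_mono _ _ _ (eventually_and _ _ Huv (Hv eps Heps))).
  intros j [-> H]; exact H.
Qed.

Lemma squeezed_plus (u v : nat -> R) a b c d :
  squeezed u a b -> squeezed v c d -> squeezed (fun j => u j + v j) (a + c) (b + d).
Proof.
  intros Hu Hv eps Heps.
  apply (eventually_mono (fun j => (a - eps / 2 <= u j <= b + eps / 2) /\
                                   (c - eps / 2 <= v j <= d + eps / 2))).
  - intros j; lra.
  - apply eventually_and; [apply Hu | apply Hv]; lra.
Qed.

Lemma squeezed_scale (u : nat -> R) a b k :
  0 < k -> squeezed u a b -> squeezed (fun j => k * u j) (k * a) (k * b).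
Proof.
  intros Hk Hu eps Heps.
  apply (eventually_mono (fun j => a - eps / k <= u j <= b + eps / k));
    [|apply Hu, Rdiv_lt_0_compat; lra].
  intros j [H1 H2].
  apply (Rmult_le_compat_l k) in H1, H2; try lra.
  rewrite Rmult_minus_distr_l in H1; rewrite Rmult_plus_distr_l in H2.
  replace (k * (eps / k)) with eps in H1, H2 by (field; lra); lra.
Qed.

Lemma squeezed_weaken (u : nat -> R) a b a' b' :
  squeezed u a b -> a' <= a -> b <= b' -> squeezed u a' b'.
Proof.
  intros Hu Ha Hb eps Heps.
  refine (eventually_mono _ _ _ (Hu eps Heps)); intros j; lra.
Qed.

Lemma liminf_le_limsup_all (u : nat -> R) : liminf_le_limsup u.
Proof.
  intros a b Hab [Ha Hb].
  destruct (Ha ((a - b) / 3) ltac:(lra)) as [N1 H1].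
  destruct (Hb ((a - b) / 3) ltac:(lra)) as [N2 H2].
  specialize (H1 (max N1 N2) ltac:(lia)); specialize (H2 (max N1 N2) ltac:(lia)); lra.
Qed.

Lemma squeezed_liminf_limsup (u : nat -> R) a b :
  squeezed u a b -> liminf_ge u a /\ liminf_le_limsup u /\ limsup_le u b.
Proof.
  intros Hu; split; [|split; [apply liminf_le_limsup_all|]];
    intros eps Heps; destruct (Hu eps Heps) as [N HN]; exists N; intros j Hj; apply HN; auto.
Qed.

Lemma cont2_at_of_squeezed (F : R -> R -> R) x0 y0 :
  (forall xs ys, cvT xs x0 -> Un_cv ys y0 -> (forall j, 0 <= ys j <= 1) ->
     squeezed (fun j => F (xs j) (ys j)) (F x0 y0) (F x0 y0)) ->
  cont2_at F x0 y0.
Proof.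
  intros HF eps Heps; apply NNPP; intros Hno.
  assert (Hbad : forall j : nat, exists p : R * R, 0 <= snd p <= 1 /\
      distT (fst p) x0 < / INR (S j) /\ Rabs (snd p - y0) < / INR (S j) /\
      ~ Rabs (F (fst p) (snd p) - F x0 y0) < eps).
  { intros j; apply NNPP; intros Hj; apply Hno; exists (/ INR (S j)); split.
    - apply Rinv_0_lt_compat, lt_0_INR; lia.
    - intros x y Hy Hx Hyy; apply NNPP; intros Hxy; apply Hj; now exists (x, y). }
  destruct (choice _ Hbad) as [p Hp].
  assert (Hsmall : forall e, e > 0 -> eventually (fun j => / INR (S j) < e)).
  { intros e He; destruct (INR_unbounded (/ e)) as [N HN]; exists N; intros j Hj.
    rewrite <- (Rinv_inv e); apply Rinv_lt_contravar.
    - apply Rmult_lt_0_compat; [apply Rinv_0_lt_compat; lra | apply lt_0_INR; lia].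
    - apply (Rlt_le_trans _ (INR N)); auto; apply le_INR; lia. }
  assert (Hxs : cvT (fun j => fst (p j)) x0).
  { intros e He; destruct (Hsmall e He) as [N HN]; exists N; intros j Hj.
    specialize (HN j Hj); destruct (Hp j) as (_ & H & _); lra. }
  assert (Hys : Un_cv (fun j => snd (p j)) y0).
  { intros e He; destruct (Hsmall e He) as [N HN]; exists N; intros j Hj.
    specialize (HN j Hj); destruct (Hp j) as (_ & _ & H & _); unfold Rdist; lra. }
  destruct (HF _ _ Hxs Hys (fun j => proj1 (Hp j)) (eps / 2) ltac:(lra)) as [N HN].
  specialize (HN N (Nat.le_refl N)); destruct (Hp N) as (_ & _ & _ & H).
  apply H, Rabs_lt_iff; lra.
Qed.

(** * The circle *)

Lemma frac_range z : 0 <= frac z < 1.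
Proof. unfold frac; destruct (base_Int_part z); lra. Qed.

Lemma Int_part_IZR_le_lt z (k : Z) : IZR k <= z < IZR k + 1 -> Int_part z = k.
Proof.
  intros Hz; destruct (base_Int_part z) as [H1 H2].
  assert (Hlt : (Int_part z < k + 1)%Z) by (apply lt_IZR; rewrite plus_IZR; lra).
  assert (Hgt : (k < Int_part z + 1)%Z) by (apply lt_IZR; rewrite plus_IZR; lra).
  lia.
Qed.

Lemma frac_unique z (k : Z) : IZR k <= z < IZR k + 1 -> frac z = z - IZR k.
Proof. intros Hz; unfold frac; now rewrite (Int_part_IZR_le_lt z k). Qed.

Lemma frac_add_IZR z (k : Z) : frac (z + IZR k) = frac z.
Proof.
  pose proof (frac_range z) as Hz; unfold frac in Hz |- *.
  rewrite (Int_part_IZR_le_lt (z + IZR k) (Int_part z + k)); rewrite plus_IZR; lra.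
Qed.

Lemma frac_IZR (k : Z) : frac (IZR k) = 0.
Proof. rewrite (frac_unique _ k); lra. Qed.

Lemma in_arc_add_IZR A p (k : Z) : in_arc A (p + IZR k) <-> in_arc A p.
Proof.
  split; intros [j Hj].
  - exists (k + j)%Z; rewrite plus_IZR, <- Rplus_assoc; auto.
  - exists (j - k)%Z; rewrite minus_IZR.
    now replace (p + IZR k + (IZR j - IZR k)) with (p + IZR j) by ring.
Qed.

Lemma in_arc_refl A y : in_arc (refl A) y <-> in_arc A (1 - y).
Proof.
  destruct A as [lo hi lc rc]; unfold refl, in_arc; simpl.
  split; intros [k Hk]; exists (- k)%Z; rewrite opp_IZR; destruct lc, rc; simpl in *; lra.
Qed.

Lemma dirac_in A y : in_arc A y -> dirac y A = 1.
Proof. unfold dirac; destruct excluded_middle_informative; tauto. Qed.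

Lemma dirac_notin A y : ~ in_arc A y -> dirac y A = 0.
Proof. unfold dirac; destruct excluded_middle_informative; tauto. Qed.

Lemma dirac_bounds y A : 0 <= dirac y A <= 1.
Proof. unfold dirac; destruct excluded_middle_informative; lra. Qed.

Lemma dirac_ext y y' A A' : (in_arc A y <-> in_arc A' y') -> dirac y A = dirac y' A'.
Proof.
  intros H; destruct (classic (in_arc A y)) as [Hy|Hy].
  - rewrite !dirac_in; tauto.
  - rewrite !dirac_notin; tauto.
Qed.

Lemma dirac_frac p q A : frac p = frac q -> dirac p A = dirac q A.
Proof.
  intros Hpq; apply dirac_ext.
  replace p with (q + IZR (Int_part p - Int_part q))
    by (rewrite minus_IZR; unfold frac in Hpq; lra).
  apply in_arc_add_IZR.
Qed.

Lemma cvT_add_const (xs : nat -> R) x0 c : cvT xs x0 -> cvT (fun j => xs j + c) (x0 + c).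
Proof.
  intros Hx e He; destruct (Hx e He) as [N HN]; exists N; intros j Hj.
  unfold distT; replace (xs j + c - (x0 + c)) with (xs j - x0) by ring; apply HN; auto.
Qed.

Lemma cvT_near (xs : nat -> R) x0 d :
  cvT xs x0 -> d > 0 -> eventually (fun j => exists k : Z, Rabs (xs j - x0 - IZR k) < d).
Proof.
  intros Hx Hd; destruct (Hx d Hd) as [N HN]; exists N; intros j Hj.
  specialize (HN j Hj); unfold distT, Rmin in HN; pose proof (frac_range (xs j - x0)).
  unfold frac in *; destruct Rle_dec.
  - exists (Int_part (xs j - x0)); rewrite Rabs_lt_iff; lra.
  - exists (Int_part (xs j - x0) + 1)%Z; rewrite plus_IZR, Rabs_lt_iff; lra.
Qed.

Lemma frac_near x x0 (k : Z) : Rabs (x - x0 - IZR k) < 1 ->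
  exists s : Z, (s = -1 \/ s = 0 \/ s = 1)%Z /\ frac x = frac x0 + (x - x0 - IZR k) + IZR s.
Proof.
  intros Hx; rewrite Rabs_lt_iff in Hx; pose proof (frac_range x0) as H0.
  set (w := frac x0 + (x - x0 - IZR k)).
  assert (Hxw : x = w + IZR (Int_part x0 + k)) by (unfold w, frac; rewrite plus_IZR; ring).
  destruct (base_Int_part w) as [H1 H2].
  assert (Hs : (-2 < Int_part w < 2)%Z) by (split; apply lt_IZR; unfold w in *; lra).
  exists (- Int_part w)%Z; split; [lia|].
  rewrite Hxw, frac_add_IZR, opp_IZR; fold w; unfold frac; ring.
Qed.

Lemma frac_cv (xs : nat -> R) x0 :
  cvT xs x0 -> 0 < frac x0 < 1 -> Un_cv (fun j => frac (xs j)) (frac x0).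
Proof.
  intros Hx Hf e He.
  set (d := Rmin e (Rmin (frac x0) (1 - frac x0))).
  assert (Hd : 0 < d /\ d <= e /\ d <= frac x0 /\ d <= 1 - frac x0)
    by (unfold d, Rmin; repeat destruct Rle_dec; lra).
  destruct (cvT_near xs x0 d Hx ltac:(lra)) as [N HN]; exists N; intros j Hj.
  destruct (HN j Hj) as [k Hk].
  destruct (frac_near (xs j) x0 k ltac:(lra)) as [s [Hs Hfr]].
  pose proof (frac_range (xs j)); rewrite Rabs_lt_iff in Hk; unfold Rdist; rewrite Rabs_lt_iff.
  destruct Hs as [-> | [-> | ->]]; simpl in Hfr; lra.
Qed.

Lemma frac_eventually_notin (xs : nat -> R) x0 c d :
  cvT xs x0 -> 0 < c -> d < 1 -> ~ (c <= frac x0 <= d) ->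
  eventually (fun j => ~ (c < frac (xs j) < d)).
Proof.
  intros Hx Hc Hd Hout; pose proof (frac_range x0) as H0.
  assert (Hg : exists g, g > 0 /\
    ((frac x0 < c /\ g = c - frac x0) \/ (d < frac x0 /\ g = frac x0 - d))).
  { destruct (Rlt_dec (frac x0) c); [exists (c - frac x0) | exists (frac x0 - d)]; lra. }
  destruct Hg as [g [Hg Hcase]].
  set (del := Rmin (Rmin c (1 - d)) (Rmin g 1)).
  assert (Hdel : 0 < del /\ del <= c /\ del <= 1 - d /\ del <= g /\ del <= 1)
    by (unfold del, Rmin; repeat destruct Rle_dec; lra).
  refine (eventually_mono _ _ _ (cvT_near xs x0 del Hx ltac:(lra))).
  intros j [k Hk]; destruct (frac_near (xs j) x0 k ltac:(lra)) as [s [Hs Hfr]].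
  rewrite Rabs_lt_iff in Hk; destruct Hs as [-> | [-> | ->]]; simpl in Hfr; lra.
Qed.

(** * Lebesgue measure of an arc inside an interval *)

Lemma ov_nonneg a b m M : 0 <= ov a b m M.
Proof. apply Rmax_l. Qed.

Lemma ov_left_of a b m M : b <= m -> ov a b m M = 0.
Proof. intros; unfold_minmax; lra. Qed.

Lemma ov_right_of a b m M : M <= a -> ov a b m M = 0.
Proof. intros; unfold_minmax; lra. Qed.

Lemma ov_apart a b m M : M <= a \/ b <= m -> ov a b m M = 0.
Proof. intros [H|H]; [apply ov_right_of | apply ov_left_of]; auto. Qed.

Lemma Un_cv_ov (a b m M : nat -> R) a0 b0 m0 M0 :
  Un_cv a a0 -> Un_cv b b0 -> Un_cv m m0 -> Un_cv M M0 ->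
  Un_cv (fun j => ov (a j) (b j) (m j) (M j)) (ov a0 b0 m0 M0).
Proof.
  intros; apply Un_cv_Rmax; [apply Un_cv_const|].
  apply CV_minus; [apply Un_cv_Rmin | apply Un_cv_Rmax]; auto.
Qed.

(* Unlike [lam_int], which reduces [a] modulo 1, this is continuous in [a] and [b];
   [lam_int_ov_lifts] rewrites the former into it. *)
Definition ov_lifts (a b m M : R) : R :=
  ov (a - 1) (b - 1) m M + ov a b m M + ov (a + 1) (b + 1) m M.

Lemma Un_cv_ov_lifts (a b m M : nat -> R) a0 b0 m0 M0 :
  Un_cv a a0 -> Un_cv b b0 -> Un_cv m m0 -> Un_cv M M0 ->
  Un_cv (fun j => ov_lifts (a j) (b j) (m j) (M j)) (ov_lifts a0 b0 m0 M0).
Proof.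
  intros Ha Hb Hm HM; pose proof Un_cv_const as Hc.
  unfold ov_lifts; repeat apply CV_plus; apply Un_cv_ov; auto;
    (apply CV_minus || apply CV_plus); auto.
Qed.

Section LamInt.

Variables lo hi m M : R.
Hypothesis Hlohi : lo <= hi <= lo + 1.
Hypothesis HmM : 0 <= m /\ M <= 1.

Lemma lam_int_ov_lifts (z : Z) : -1 <= lo - IZR z <= 1 ->
  lam_int (cc lo hi) m M = ov_lifts (lo - IZR z) (hi - IZR z) m M.
Proof.
  intros Hz; unfold lam_int, ov_lifts; simpl.
  destruct (Rlt_dec (lo - IZR z) 0) as [Hneg|Hneg];
    [|destruct (Rlt_dec (lo - IZR z) 1) as [Hlt1|Hlt1]].
  - rewrite (frac_unique lo (z - 1)) by (rewrite minus_IZR; lra); rewrite minus_IZR.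
    rewrite (ov_left_of (lo - IZR z - 1)) by lra.
    replace (lo - (IZR z - 1) - 1) with (lo - IZR z) by ring.
    replace (hi - lo + (lo - (IZR z - 1)) - 1) with (hi - IZR z) by ring.
    replace (lo - (IZR z - 1)) with (lo - IZR z + 1) by ring.
    replace (hi - lo + (lo - IZR z + 1)) with (hi - IZR z + 1) by ring; ring.
  - rewrite (frac_unique lo z) by lra.
    rewrite (ov_right_of (lo - IZR z + 1)) by lra.
    replace (hi - lo + (lo - IZR z)) with (hi - IZR z) by ring; ring.
  - rewrite (frac_unique lo (z + 1)) by (rewrite plus_IZR; lra); rewrite plus_IZR.
    rewrite (ov_left_of (lo - (IZR z + 1) - 1)) by lra.
    rewrite (ov_right_of (lo - IZR z)), (ov_right_of (lo - IZR z + 1)) by lra.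
    replace (lo - (IZR z + 1)) with (lo - IZR z - 1) by ring.
    replace (hi - lo + (lo - IZR z - 1)) with (hi - IZR z - 1) by ring; ring.
Qed.

Lemma lam_int_disjoint :
  (forall k : Z, M + IZR k < lo \/ hi < m + IZR k) -> lam_int (cc lo hi) m M = 0.
Proof.
  intros Hk; pose proof (frac_range lo) as Hz; unfold frac in Hz.
  set (z := Int_part lo) in *.
  pose proof (Hk (z + 1)%Z) as H1; pose proof (Hk z) as H2; pose proof (Hk (z - 1)%Z) as H3.
  rewrite plus_IZR in H1; rewrite minus_IZR in H3.
  rewrite (lam_int_ov_lifts z) by lra; unfold ov_lifts.
  rewrite !ov_apart by lra; ring.
Qed.

Lemma lam_int_contain (k : Z) : m <= M -> lo <= m + IZR k -> M + IZR k <= hi ->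
  lam_int (cc lo hi) m M = M - m.
Proof.
  intros HmM' Hlo Hhi.
  rewrite (lam_int_ov_lifts k) by lra; unfold ov_lifts.
  rewrite (ov_left_of (lo - IZR k - 1)), (ov_right_of (lo - IZR k + 1)) by lra.
  unfold_minmax; lra.
Qed.

Lemma lam_int_nonneg : 0 <= lam_int (cc lo hi) m M.
Proof. apply Rplus_le_le_0_compat; apply ov_nonneg. Qed.

Lemma lam_int_le : m <= M -> lam_int (cc lo hi) m M <= M - m.
Proof.
  intros HmM'; unfold lam_int; simpl; pose proof (frac_range lo).
  set (f := frac lo) in *; clearbody f; unfold_minmax; lra.
Qed.

End LamInt.

Lemma lam_int_full lo hi : lo <= hi <= lo + 1 -> lam_int (cc lo hi) 0 1 = hi - lo.
Proof.
  intros; unfold lam_int; simpl; pose proof (frac_range lo).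
  set (f := frac lo) in *; clearbody f; unfold_minmax; lra.
Qed.

Lemma lam_int_cv (lo hi m M : nat -> R) lo0 hi0 m0 M0 :
  Un_cv lo lo0 -> Un_cv hi hi0 -> Un_cv m m0 -> Un_cv M M0 ->
  (forall j, lo j <= hi j <= lo j + 1 /\ 0 <= m j /\ M j <= 1) ->
  lo0 <= hi0 <= lo0 + 1 -> 0 <= m0 -> M0 <= 1 ->
  Un_cv (fun j => lam_int (cc (lo j) (hi j)) (m j) (M j)) (lam_int (cc lo0 hi0) m0 M0).
Proof.
  intros Hlo Hhi Hm HM Hj Hlohi Hm0 HM0.
  pose proof (frac_range (lo0 + / 2)) as Hz; unfold frac in Hz.
  set (z := Int_part (lo0 + / 2)) in *.
  rewrite (lam_int_ov_lifts _ _ _ _ Hlohi (conj Hm0 HM0) z) by lra.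
  apply (Un_cv_eventually_eq _ (fun j => ov_lifts (lo j - IZR z) (hi j - IZR z) (m j) (M j))).
  - refine (eventually_mono _ _ _ (Un_cv_near lo lo0 (1/2) Hlo ltac:(lra))).
    intros j Hnear; rewrite Rabs_lt_iff in Hnear; destruct (Hj j) as [? [? ?]].
    apply lam_int_ov_lifts; auto; lra.
  - apply Un_cv_ov_lifts; auto; apply CV_minus; auto; apply Un_cv_const.
Qed.

Lemma not_in_cc_gap lo hi p : lo <= hi -> ~ in_arc (cc lo hi) p ->
  exists k : Z, p + IZR k - 1 < lo /\ hi < p + IZR k.
Proof.
  intros Hlohi Hout; destruct (base_Int_part (lo - p)) as [H1 H2].
  exists (Int_part (lo - p) + 1)%Z; rewrite plus_IZR.
  assert (Hlt : p + IZR (Int_part (lo - p)) < lo).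
  { destruct (Req_dec (p + IZR (Int_part (lo - p))) lo) as [E|E]; [|lra].
    exfalso; apply Hout; exists (Int_part (lo - p)); simpl; lra. }
  split; [lra|]; apply Rnot_le_lt; intros Hle.
  apply Hout; exists (Int_part (lo - p) + 1)%Z; rewrite plus_IZR; simpl; lra.
Qed.

Section ArcSequences.

Variables (m M lo hi : nat -> R) (p lo0 hi0 : R).
Hypotheses (Hm : Un_cv m p) (HM : Un_cv M p) (Hlo : Un_cv lo lo0) (Hhi : Un_cv hi hi0).

Lemma eventually_apart : lo0 <= hi0 -> ~ in_arc (cc lo0 hi0) p ->
  eventually (fun j => forall k : Z, M j + IZR k < lo j \/ hi j < m j + IZR k).
Proof.
  intros Hlohi Hout; destruct (not_in_cc_gap lo0 hi0 p Hlohi Hout) as [k [Hk1 Hk2]].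
  set (g := Rmin (lo0 - (p + IZR k - 1)) (p + IZR k - hi0)).
  assert (Hg : 0 < g /\ g <= lo0 - (p + IZR k - 1) /\ g <= p + IZR k - hi0)
    by (unfold g, Rmin; destruct Rle_dec; lra).
  refine (eventually_mono _ _ _
    (eventually_and _ _ (eventually_and _ _ (Un_cv_near m p (g / 2) Hm ltac:(lra))
                                            (Un_cv_near M p (g / 2) HM ltac:(lra)))
                        (eventually_and _ _ (Un_cv_near lo lo0 (g / 2) Hlo ltac:(lra))
                                            (Un_cv_near hi hi0 (g / 2) Hhi ltac:(lra))))).
  intros j [[Hmj HMj] [Hloj Hhij]] i; rewrite Rabs_lt_iff in Hmj, HMj, Hloj, Hhij.
  destruct (Z.lt_ge_cases i k) as [Hi|Hi].
  - assert (IZR i <= IZR k - 1) by (rewrite <- minus_IZR; apply IZR_le; lia); lra.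
  - apply IZR_le in Hi; lra.
Qed.

Lemma eventually_inside : in_arc (Arc lo0 hi0 false false) p ->
  exists k : Z, eventually (fun j => lo j <= m j + IZR k /\ M j + IZR k <= hi j).
Proof.
  intros [k [Hk1 Hk2]]; simpl in Hk1, Hk2; exists k.
  assert (Hsh : forall u, Un_cv u p -> Un_cv (fun j => u j + IZR k) (p + IZR k))
    by (intros; apply CV_plus; auto; apply Un_cv_const).
  refine (eventually_mono _ _ _ (eventually_and _ _
    (Un_cv_lt lo _ lo0 _ Hlo (Hsh m Hm) Hk1) (Un_cv_lt _ hi _ hi0 (Hsh M HM) Hhi Hk2))).
  intros j [H1 H2]; lra.
Qed.

End ArcSequences.

(** * Normalised Lebesgue measure on the intervals I_t *)

Lemma Rin_open_iff a b z : Rin_open a b z = true <-> a < z < b.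
Proof.
  unfold Rin_open; destruct Rlt_dec; [destruct Rlt_dec|]; split; intros; try lra; easy.
Qed.

Lemma Rin_open_false a b z : ~ (a < z < b) -> Rin_open a b z = false.
Proof. rewrite <- Rin_open_iff; destruct Rin_open; tauto. Qed.

Lemma lam_refl A : lam (refl A) = lam A.
Proof. unfold lam, refl; simpl; ring. Qed.

Definition clamp (a b t : R) : R := Rmax a (Rmin b t).

Lemma clamp_in a b t : a <= b -> a <= clamp a b t <= b.
Proof. unfold clamp; intros; unfold_minmax; lra. Qed.

Lemma clamp_id a b t : a <= t <= b -> clamp a b t = t.
Proof. unfold clamp; intros; unfold_minmax; lra. Qed.

Lemma Un_cv_clamp a b (t : nat -> R) t0 :
  Un_cv t t0 -> Un_cv (fun j => clamp a b (t j)) (clamp a b t0).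
Proof. intros; apply Un_cv_Rmax, Un_cv_Rmin; auto; apply Un_cv_const. Qed.

Lemma cont_on_Un_cv a b f (u : nat -> R) u0 : cont_on a b f ->
  (forall j, a <= u j <= b) -> a <= u0 <= b -> Un_cv u u0 -> Un_cv (fun j => f (u j)) (f u0).
Proof.
  intros Hf Hu Hu0 Hcv e He; destruct (Hf u0 Hu0 e He) as [d [Hd Hfd]].
  destruct (Hcv d Hd) as [N HN]; exists N; intros j Hj; apply Hfd; auto; apply HN; auto.
Qed.

Section Strip.

Variables (xb1 xb2 x1s y1s : R) (psi phi : R -> R).
Hypotheses (Hxb : xb1 < x1s < xb2)
  (Hpsic : cont_on xb1 xb2 psi) (Hphic : cont_on xb1 xb2 phi)
  (Hpsir : forall x, xb1 <= x <= xb2 -> 0 <= psi x <= 1)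
  (Hphir : forall x, xb1 <= x <= xb2 -> 0 <= phi x <= 1)
  (Hpsi1 : psi xb1 = 0) (Hphi1 : phi xb1 = 1) (Hpsi2 : psi xb2 = 1) (Hphi2 : phi xb2 = 0)
  (Hlt : forall x, xb1 <= x < x1s -> psi x < phi x)
  (Hgt : forall x, x1s < x <= xb2 -> psi x > phi x)
  (Heq : psi x1s = phi x1s) (Heqy : frac (psi x1s) = frac y1s).

(* The paper's mu^0_t for t on the first half of the circle, see [mu0_first]. *)
Definition strip_mu0 (t : R) (A : arc) : R :=
  if Rin_open xb1 xb2 t then
    (if Req_b t x1s then dirac y1s A
     else lam_int A (Rmin (psi t) (phi t)) (Rmax (psi t) (phi t)) / Rabs (phi t - psi t))
  else lam A.

(* The endpoints of the interval I_t, extended by I_xb1 = I_xb2 = [0,1] outside [xb1, xb2]. *)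
Definition Ilo (t : R) : R := Rmin (psi (clamp xb1 xb2 t)) (phi (clamp xb1 xb2 t)).
Definition Ihi (t : R) : R := Rmax (psi (clamp xb1 xb2 t)) (phi (clamp xb1 xb2 t)).

Lemma Ilo_Ihi_range t : 0 <= Ilo t <= Ihi t /\ Ihi t <= 1.
Proof.
  unfold Ilo, Ihi; pose proof (clamp_in xb1 xb2 t ltac:(lra)) as Hc.
  pose proof (Hpsir _ Hc); pose proof (Hphir _ Hc); unfold_minmax; lra.
Qed.

Lemma Ilo_lt_Ihi t : t <> x1s -> Ilo t < Ihi t.
Proof.
  intros Ht; unfold Ilo, Ihi; pose proof (clamp_in xb1 xb2 t ltac:(lra)) as Hc.
  assert (Hne : clamp xb1 xb2 t <> x1s) by (unfold clamp; unfold_minmax; lra).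
  set (c := clamp xb1 xb2 t) in *.
  destruct (Rlt_dec c x1s).
  - specialize (Hlt c ltac:(lra)); unfold_minmax; lra.
  - specialize (Hgt c ltac:(lra)); unfold_minmax; lra.
Qed.

Lemma Ilo_x1s : Ilo x1s = psi x1s.
Proof. unfold Ilo; rewrite clamp_id, <- Heq by lra; apply Rmin_left; lra. Qed.

Lemma Ihi_x1s : Ihi x1s = psi x1s.
Proof. unfold Ihi; rewrite clamp_id, <- Heq by lra; apply Rmax_left; lra. Qed.

Lemma Un_cv_Ilo_Ihi (t : nat -> R) t0 :
  Un_cv t t0 -> Un_cv (fun j => Ilo (t j)) (Ilo t0) /\ Un_cv (fun j => Ihi (t j)) (Ihi t0).
Proof.
  intros Ht; pose proof (Un_cv_clamp xb1 xb2 t t0 Ht) as Hc.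
  assert (Hin : forall s, xb1 <= clamp xb1 xb2 s <= xb2) by (intros; apply clamp_in; lra).
  split; [apply Un_cv_Rmin | apply Un_cv_Rmax]; apply (cont_on_Un_cv xb1 xb2); auto.
Qed.

Lemma strip_mu0_outside t A : ~ (xb1 < t < xb2) -> strip_mu0 t A = lam A.
Proof. intros Ht; unfold strip_mu0; now rewrite Rin_open_false. Qed.

Lemma strip_mu0_x1s A : strip_mu0 x1s A = dirac y1s A.
Proof.
  unfold strip_mu0, Req_b; rewrite (proj2 (Rin_open_iff _ _ _) Hxb).
  destruct Req_EM_T; tauto.
Qed.

Lemma strip_mu0_off t A : t <> x1s -> 0 <= lam A <= 1 ->
  strip_mu0 t A = lam_int (cc (a_lo A) (a_hi A)) (Ilo t) (Ihi t) / (Ihi t - Ilo t).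
Proof.
  intros Ht HA; unfold lam in HA; unfold strip_mu0, Req_b, Ilo, Ihi.
  destruct (Rlt_dec xb1 t); [destruct (Rlt_dec t xb2)|].
  - rewrite (proj2 (Rin_open_iff _ _ _)) by lra; destruct Req_EM_T; [tauto|].
    rewrite clamp_id by lra; f_equal; unfold Rabs, Rmax, Rmin; destruct Rle_dec, Rcase_abs; lra.
  - rewrite Rin_open_false by lra.
    assert (Hc : clamp xb1 xb2 t = xb2) by (unfold clamp; unfold_minmax; lra).
    rewrite Hc, Hpsi2, Hphi2, Rmin_right, Rmax_left, lam_int_full by lra.
    unfold lam; field.
  - rewrite Rin_open_false by lra.
    assert (Hc : clamp xb1 xb2 t = xb1) by (unfold clamp; unfold_minmax; lra).
    rewrite Hc, Hpsi1, Hphi1, Rmin_left, Rmax_right, lam_int_full by lra.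
    unfold lam; field.
Qed.

Lemma strip_mu0_bounds t A : 0 <= lam A <= 1 -> 0 <= strip_mu0 t A <= 1.
Proof.
  intros HA; destruct (Req_dec t x1s) as [->|Ht].
  - rewrite strip_mu0_x1s; apply dirac_bounds.
  - rewrite strip_mu0_off by auto.
    pose proof (Ilo_Ihi_range t); pose proof (Ilo_lt_Ihi t Ht); unfold lam in HA.
    pose proof (lam_int_nonneg (a_lo A) (a_hi A) (Ilo t) (Ihi t)).
    pose proof (lam_int_le (a_lo A) (a_hi A) (Ilo t) (Ihi t) ltac:(lra) ltac:(lra) ltac:(lra)).
    apply Rdiv_in_unit; lra.
Qed.

Lemma strip_mu0_zero t lo hi : lo <= hi <= lo + 1 ->
  (forall k : Z, Ihi t + IZR k < lo \/ hi < Ilo t + IZR k) -> strip_mu0 t (cc lo hi) = 0.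
Proof.
  intros Hlohi Hapart; destruct (Req_dec t x1s) as [->|Ht].
  - rewrite strip_mu0_x1s, <- (dirac_frac (psi x1s)) by auto.
    apply dirac_notin; intros [k Hk]; simpl in Hk.
    specialize (Hapart k); rewrite Ilo_x1s, Ihi_x1s in Hapart; lra.
  - pose proof (Ilo_Ihi_range t).
    rewrite strip_mu0_off by (auto; unfold lam; simpl; lra); simpl.
    rewrite (lam_int_disjoint lo hi (Ilo t) (Ihi t) Hlohi ltac:(lra) Hapart); unfold Rdiv; ring.
Qed.

Lemma strip_mu0_one t lo hi (k : Z) : lo <= hi <= lo + 1 ->
  lo <= Ilo t + IZR k -> Ihi t + IZR k <= hi -> strip_mu0 t (cc lo hi) = 1.
Proof.
  intros Hlohi Hlo Hhi; destruct (Req_dec t x1s) as [->|Ht].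
  - rewrite strip_mu0_x1s, <- (dirac_frac (psi x1s)) by auto.
    apply dirac_in; exists k; simpl; rewrite Ilo_x1s in Hlo; rewrite Ihi_x1s in Hhi; lra.
  - pose proof (Ilo_Ihi_range t); pose proof (Ilo_lt_Ihi t Ht).
    rewrite strip_mu0_off by (auto; unfold lam; simpl; lra); simpl.
    rewrite (lam_int_contain lo hi (Ilo t) (Ihi t) Hlohi ltac:(lra) k) by lra; field; lra.
Qed.

Lemma strip_mu0_open t A : 0 <= lam A <= 1 ->
  (t = x1s -> (a_lc A = true -> forall k : Z, y1s + IZR k <> a_lo A) /\
              (a_rc A = true -> forall k : Z, y1s + IZR k <> a_hi A)) ->
  strip_mu0 t A = strip_mu0 t (Arc (a_lo A) (a_hi A) false false).
Proof.
  intros HA Hends; destruct (Req_dec t x1s) as [->|Ht].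
  - destruct (Hends eq_refl) as [Hl Hr]; rewrite !strip_mu0_x1s; apply dirac_ext.
    destruct A as [lo hi lc rc]; simpl in *; split; intros [k [H1 H2]]; exists k; simpl in *.
    + split; [destruct lc; [specialize (Hl eq_refl k)|]
             |destruct rc; [specialize (Hr eq_refl k)|]]; lra.
    + split; [destruct lc|destruct rc]; lra.
  - now rewrite !strip_mu0_off.
Qed.

Lemma strip_mu0_subadd t A B C :
  a_lo A = a_lo B -> a_hi A = a_hi B -> 0 <= lam A <= 1 -> 0 <= lam C <= 1 ->
  (forall q, in_arc A q -> in_arc B q \/ in_arc C q) ->
  strip_mu0 t A <= strip_mu0 t B + strip_mu0 t C.
Proof.
  intros Hlo Hhi HA HC Hsub; destruct (Req_dec t x1s) as [->|Ht].
  - rewrite !strip_mu0_x1s; pose proof (dirac_bounds y1s A);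
    pose proof (dirac_bounds y1s B); pose proof (dirac_bounds y1s C).
    destruct (classic (in_arc A y1s)) as [Hin|Hout].
    + destruct (Hsub _ Hin) as [HB|HC']; [rewrite (dirac_in B) | rewrite (dirac_in C)]; auto; lra.
    + rewrite dirac_notin; auto; lra.
  - assert (HB : 0 <= lam B <= 1) by (unfold lam in *; rewrite <- Hlo, <- Hhi; auto).
    pose proof (strip_mu0_bounds t C HC).
    rewrite (strip_mu0_off t A), (strip_mu0_off t B), Hlo, Hhi by auto; lra.
Qed.

Section StripSequences.

Variables (t lo hi : nat -> R) (t0 lo0 hi0 : R).
Hypotheses (Ht : Un_cv t t0) (Hlo : Un_cv lo lo0) (Hhi : Un_cv hi hi0)
  (Hlohi : forall j, lo j <= hi j <= lo j + 1) (Hlohi0 : lo0 <= hi0 <= lo0 + 1).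

Lemma strip_mu0_cv_off : t0 <> x1s ->
  Un_cv (fun j => strip_mu0 (t j) (cc (lo j) (hi j))) (strip_mu0 t0 (cc lo0 hi0)).
Proof.
  intros Ht0; destruct (Un_cv_Ilo_Ihi t t0 Ht) as [HIlo HIhi].
  rewrite strip_mu0_off by (unfold lam; simpl; lra).
  apply (Un_cv_eventually_eq _ (fun j =>
    lam_int (cc (lo j) (hi j)) (Ilo (t j)) (Ihi (t j)) / (Ihi (t j) - Ilo (t j)))).
  - refine (eventually_mono _ _ _
      (Un_cv_near t t0 (Rabs (t0 - x1s)) Ht ltac:(apply Rabs_pos_lt; lra))).
    intros j Hj; apply strip_mu0_off; [|unfold lam; simpl; specialize (Hlohi j); lra].
    intros E; rewrite E, <- Rabs_Ropp, Ropp_minus_distr in Hj; lra.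
  - assert (HI : forall s, 0 <= Ilo s /\ Ihi s <= 1)
      by (intros s; pose proof (Ilo_Ihi_range s); lra).
    apply CV_mult.
    + apply lam_int_cv; auto; intros; repeat split; try apply Hlohi; apply HI.
    + apply Un_cv_Rinv; [apply CV_minus; auto|].
      pose proof (Ilo_lt_Ihi t0 Ht0); lra.
Qed.

Lemma strip_mu0_limsup_x1s : t0 = x1s ->
  eventually (fun j => strip_mu0 (t j) (cc (lo j) (hi j)) <= strip_mu0 x1s (cc lo0 hi0)).
Proof.
  intros ->; destruct (Un_cv_Ilo_Ihi t x1s Ht) as [HIlo HIhi].
  rewrite Ilo_x1s in HIlo; rewrite Ihi_x1s in HIhi.
  rewrite strip_mu0_x1s, <- (dirac_frac (psi x1s)) by auto.
  destruct (classic (in_arc (cc lo0 hi0) (psi x1s))) as [Hin|Hout].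
  - rewrite dirac_in by auto; apply eventually_always; intros j.
    apply strip_mu0_bounds; unfold lam; simpl; specialize (Hlohi j); lra.
  - rewrite dirac_notin by auto.
    refine (eventually_mono _ _ _
      (eventually_apart _ _ _ _ _ _ _ HIlo HIhi Hlo Hhi ltac:(lra) Hout)).
    intros j Hj; rewrite strip_mu0_zero; auto; lra.
Qed.

Lemma strip_mu0_liminf_x1s : t0 = x1s ->
  eventually (fun j =>
    strip_mu0 x1s (Arc lo0 hi0 false false) <= strip_mu0 (t j) (cc (lo j) (hi j))).
Proof.
  intros ->; destruct (Un_cv_Ilo_Ihi t x1s Ht) as [HIlo HIhi].
  rewrite Ilo_x1s in HIlo; rewrite Ihi_x1s in HIhi.
  rewrite strip_mu0_x1s, <- (dirac_frac (psi x1s)) by auto.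
  destruct (classic (in_arc (Arc lo0 hi0 false false) (psi x1s))) as [Hin|Hout].
  - rewrite dirac_in by auto.
    destruct (eventually_inside _ _ _ _ _ _ _ HIlo HIhi Hlo Hhi Hin) as [k Hk].
    refine (eventually_mono _ _ _ Hk); intros j [H1 H2].
    rewrite (strip_mu0_one _ _ _ k); auto; lra.
  - rewrite dirac_notin by auto; apply eventually_always; intros j.
    apply strip_mu0_bounds; unfold lam; simpl; specialize (Hlohi j); lra.
Qed.

Lemma strip_mu0_squeezed :
  squeezed (fun j => strip_mu0 (t j) (cc (lo j) (hi j)))
    (strip_mu0 t0 (Arc lo0 hi0 false false)) (strip_mu0 t0 (cc lo0 hi0)).
Proof.
  destruct (Req_dec t0 x1s) as [Ht0|Ht0].
  - intros eps Heps.
    refine (eventually_mono _ _ _ (eventually_and _ _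
      (strip_mu0_liminf_x1s Ht0) (strip_mu0_limsup_x1s Ht0))).
    subst t0; intros j; lra.
  - replace (strip_mu0 t0 (Arc lo0 hi0 false false)) with (strip_mu0 t0 (cc lo0 hi0))
      by (rewrite !strip_mu0_off by (unfold lam; simpl; lra); reflexivity).
    apply squeezed_of_Un_cv, strip_mu0_cv_off; auto.
Qed.

End StripSequences.

(** * The measures mu^0_x *)

Hypotheses (Hxb0 : 0 < xb1) (Hxb12 : xb2 < 1/2).

Let mu0 := mu0 xb1 xb2 x1s y1s psi phi.

Lemma mu0_first x A : ~ (xb1 + 1/2 < frac x < xb2 + 1/2) -> mu0 x A = strip_mu0 (frac x) A.
Proof.
  intros Hx; unfold mu0, Defs.mu0, strip_mu0; cbv zeta.
  destruct (Rin_open xb1 xb2 (frac x)); [reflexivity|]; now rewrite Rin_open_false.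
Qed.

Lemma mu0_second x A : ~ (xb1 < frac x < xb2) -> mu0 x A = strip_mu0 (frac x - 1/2) (refl A).
Proof.
  intros Hx; unfold mu0, Defs.mu0; cbv zeta; rewrite Rin_open_false by auto.
  destruct (Rin_open (xb1 + 1/2) (xb2 + 1/2) (frac x)) eqn:E.
  - apply Rin_open_iff in E; unfold strip_mu0; rewrite (proj2 (Rin_open_iff _ _ _)) by lra.
    destruct Req_b; [|reflexivity].
    apply dirac_ext; rewrite in_arc_refl; tauto.
  - rewrite strip_mu0_outside, lam_refl; [reflexivity|]; intros Hin.
    assert (Rin_open (xb1 + 1/2) (xb2 + 1/2) (frac x) = true) by (apply Rin_open_iff; lra).
    congruence.
Qed.

Lemma mu0_bounds x A : 0 <= lam A <= 1 -> 0 <= mu0 x A <= 1.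
Proof.
  intros HA; destruct (classic (xb1 < frac x < xb2)).
  - rewrite mu0_first by lra; apply strip_mu0_bounds; auto.
  - rewrite mu0_second by auto; apply strip_mu0_bounds; rewrite lam_refl; auto.
Qed.

Lemma mu0_subadd x A B C :
  a_lo A = a_lo B -> a_hi A = a_hi B -> 0 <= lam A <= 1 -> 0 <= lam C <= 1 ->
  (forall q, in_arc A q -> in_arc B q \/ in_arc C q) ->
  mu0 x A <= mu0 x B + mu0 x C.
Proof.
  intros Hlo Hhi HA HC Hsub; destruct (classic (xb1 < frac x < xb2)).
  - rewrite !mu0_first by lra; apply strip_mu0_subadd; auto.
  - rewrite !mu0_second by auto; apply strip_mu0_subadd; rewrite ?lam_refl; auto.
    + unfold refl; simpl; congruence.
    + unfold refl; simpl; congruence.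
    + intros q; rewrite !in_arc_refl; auto.
Qed.

Section Mu0Sequences.

Variables (xs lo hi : nat -> R) (x0 lo0 hi0 : R).
Hypotheses (Hxs : cvT xs x0) (Hlo : Un_cv lo lo0) (Hhi : Un_cv hi hi0)
  (Hlohi : forall j, lo j <= hi j <= lo j + 1) (Hlohi0 : lo0 <= hi0 <= lo0 + 1)
  (Hz1 : frac x0 = x1s -> forall k : Z, y1s + IZR k <> lo0)
  (Hz2 : frac x0 = x1s + 1/2 -> forall k : Z, 1 - y1s + IZR k <> lo0).

Lemma mu0_squeezed_first : xb1 <= frac x0 <= xb2 ->
  squeezed (fun j => mu0 (xs j) (cc (lo j) (hi j))) (mu0 x0 (co lo0 hi0)) (mu0 x0 (cc lo0 hi0)).
Proof.
  intros Hx0; rewrite !mu0_first by lra.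
  apply (squeezed_eventually_eq _ (fun j => strip_mu0 (frac (xs j)) (cc (lo j) (hi j)))).
  { refine (eventually_mono _ _ _ (frac_eventually_notin xs x0 (xb1 + 1/2) (xb2 + 1/2) Hxs
      ltac:(lra) ltac:(lra) ltac:(lra))); intros j Hj; now rewrite mu0_first. }
  rewrite (strip_mu0_open _ (co lo0 hi0)).
  - apply strip_mu0_squeezed; auto; apply frac_cv; auto; lra.
  - unfold lam; simpl; lra.
  - intros Hx; split; [intros _ k; apply Hz1; auto | easy].
Qed.

Lemma mu0_squeezed_second : xb1 + 1/2 <= frac x0 <= xb2 + 1/2 ->
  squeezed (fun j => mu0 (xs j) (cc (lo j) (hi j))) (mu0 x0 (co lo0 hi0)) (mu0 x0 (cc lo0 hi0)).
Proof.
  intros Hx0; rewrite !mu0_second by lra.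
  apply (squeezed_eventually_eq _
    (fun j => strip_mu0 (frac (xs j) - 1/2) (cc (1 - hi j) (1 - lo j)))).
  { refine (eventually_mono _ _ _ (frac_eventually_notin xs x0 xb1 xb2 Hxs
      ltac:(lra) ltac:(lra) ltac:(lra))); intros j Hj; now rewrite mu0_second. }
  rewrite (strip_mu0_open _ (refl (co lo0 hi0))).
  - apply (strip_mu0_squeezed (fun j => frac (xs j) - 1/2) (fun j => 1 - hi j) (fun j => 1 - lo j)).
    + apply CV_minus; [apply frac_cv; auto; lra | apply Un_cv_const].
    + apply CV_minus; auto; apply Un_cv_const.
    + apply CV_minus; auto; apply Un_cv_const.
    + intros j; specialize (Hlohi j); lra.
    + simpl; lra.
  - unfold lam, refl; simpl; lra.
  - intros Hx; split; [easy|]; intros _ k Hk; simpl in Hk.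
    apply (Hz2 ltac:(lra) (- k)); rewrite opp_IZR; lra.
Qed.

Lemma mu0_squeezed_away : ~ (xb1 <= frac x0 <= xb2) -> ~ (xb1 + 1/2 <= frac x0 <= xb2 + 1/2) ->
  squeezed (fun j => mu0 (xs j) (cc (lo j) (hi j))) (mu0 x0 (co lo0 hi0)) (mu0 x0 (cc lo0 hi0)).
Proof.
  intros Hx1 Hx2.
  assert (Hlam : forall x A, ~ (xb1 < frac x < xb2) -> ~ (xb1 + 1/2 < frac x < xb2 + 1/2) ->
    mu0 x A = lam A) by (intros; rewrite mu0_first, strip_mu0_outside; auto).
  rewrite !Hlam by lra.
  apply (squeezed_eventually_eq _ (fun j => lam (cc (lo j) (hi j)))).
  { refine (eventually_mono _ _ _ (eventually_and _ _
      (frac_eventually_notin xs x0 xb1 xb2 Hxs ltac:(lra) ltac:(lra) ltac:(lra))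
      (frac_eventually_notin xs x0 (xb1 + 1/2) (xb2 + 1/2) Hxs ltac:(lra) ltac:(lra) ltac:(lra)))).
    intros j [Hj1 Hj2]; now rewrite Hlam. }
  apply squeezed_of_Un_cv; unfold lam; simpl; apply CV_minus; auto.
Qed.

Lemma mu0_squeezed :
  squeezed (fun j => mu0 (xs j) (cc (lo j) (hi j))) (mu0 x0 (co lo0 hi0)) (mu0 x0 (cc lo0 hi0)).
Proof.
  destruct (classic (xb1 <= frac x0 <= xb2)); [apply mu0_squeezed_first; auto|].
  destruct (classic (xb1 + 1/2 <= frac x0 <= xb2 + 1/2));
    [apply mu0_squeezed_second | apply mu0_squeezed_away]; auto.
Qed.

End Mu0Sequences.

End Strip.

(** * The skew product and its cocycle *)

Lemma iter_commute {A : Type} (f g : A -> A) n p :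
  (forall q, f (g q) = g (f q)) -> Nat.iter n f (g p) = g (Nat.iter n f p).
Proof. intros Hfg; induction n; simpl; [|rewrite IHn]; auto. Qed.

Lemma Un_cv_round (xs : nat -> R) x0 :
  cvT xs x0 -> Un_cv (fun j => xs j - IZR (Int_part (xs j - x0 + / 2))) x0.
Proof.
  intros Hx e He; set (d := Rmin e (/ 2)).
  assert (Hd : 0 < d /\ d <= e /\ d <= / 2) by (unfold d, Rmin; destruct Rle_dec; lra).
  destruct (cvT_near xs x0 d Hx ltac:(lra)) as [N HN]; exists N; intros j Hj.
  destruct (HN j Hj) as [k Hk]; rewrite Rabs_lt_iff in Hk.
  rewrite (Int_part_IZR_le_lt _ k) by lra; unfold Rdist; rewrite Rabs_lt_iff; lra.
Qed.

Definition translate (k : Z) (d : R) (p : R * R) : R * R := (fst p + IZR k, snd p + d).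

Section SkewProduct.

Variables (al : R) (r : R -> R).
Hypothesis Hrper : forall x, r (x + 1) = r x.

Lemma r_add_IZR x (k : Z) : r (x + IZR k) = r x.
Proof.
  assert (Hnat : forall n x, r (x + INR n) = r x).
  { induction n as [|n IH]; intros y; [now rewrite Rplus_0_r|].
    rewrite S_INR, <- Rplus_assoc, Hrper; auto. }
  destruct k as [|p|p]; [now rewrite Rplus_0_r| |].
  - rewrite <- Znat.positive_nat_Z, <- INR_IZR_INZ; auto.
  - rewrite <- (Hnat (Pos.to_nat p) (x + IZR (Z.neg p))); f_equal.
    rewrite INR_IZR_INZ, Znat.positive_nat_Z, <- Pos2Z.opp_pos, opp_IZR; ring.
Qed.

Lemma S_map_translate k d p : S_map al r (translate k d p) = translate k d (S_map al r p).
Proof. destruct p; unfold S_map, translate; simpl; rewrite r_add_IZR; f_equal; ring. Qed.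

Lemma S_inv_translate k d p : S_inv al r (translate k d p) = translate k d (S_inv al r p).
Proof.
  destruct p as [x y]; unfold S_inv, translate; simpl.
  replace (x + IZR k - al) with (x - al + IZR k) by ring; rewrite r_add_IZR; f_equal; ring.
Qed.

Lemma iter_S_map n x y : Nat.iter n (S_map al r) (x, y) = (x + INR n * al, Defs.sigma al r n x y).
Proof.
  unfold Defs.sigma; rewrite (surjective_pairing (Nat.iter _ _ _)); f_equal.
  induction n as [|n IH]; [simpl; ring|].
  rewrite Nat.iter_succ, S_INR; unfold S_map at 1; simpl fst; rewrite IH; ring.
Qed.

Lemma sigma_S n x y : Defs.sigma al r (S n) x y = Defs.sigma al r n x y + r (x + INR n * al).
Proof.
  unfold Defs.sigma at 1; rewrite Nat.iter_succ, iter_S_map; reflexivity.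
Qed.

Lemma sigma_add_IZR n x y (k : Z) : Defs.sigma al r n (x + IZR k) y = Defs.sigma al r n x y.
Proof.
  unfold Defs.sigma.
  replace (x + IZR k, y) with (translate k 0 (x, y)) by (unfold translate; simpl; f_equal; ring).
  rewrite (iter_commute _ _ _ _ (S_map_translate k 0)); unfold translate; simpl; ring.
Qed.

Lemma iter_S_inv_S_map n p : Nat.iter n (S_inv al r) (Nat.iter n (S_map al r) p) = p.
Proof.
  induction n as [|n IH]; [reflexivity|].
  rewrite Nat.iter_succ_r; simpl Nat.iter at 2.
  replace (S_inv al r (S_map al r (Nat.iter n (S_map al r) p)))
    with (Nat.iter n (S_map al r) p); auto.
  destruct (Nat.iter n (S_map al r) p) as [a b]; unfold S_inv, S_map; simpl.
  replace (a + al - al) with a by ring; f_equal; ring.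
Qed.

Lemma S_iter_neg n p : exists m : Z, S_iter al r m p = Nat.iter n (S_inv al r) p.
Proof.
  destruct n as [|n]; [now exists 0%Z|].
  exists (Z.neg (Pos.of_succ_nat n)); simpl; now rewrite SuccNat2Pos.id_succ.
Qed.

(* If sigma^n_x0(0) were a lift of ys while R^n x0 = xs, then S^-n would map (xs, ys) to a
   point over 0 in the fibre coordinate. *)
Lemma sigma_avoids_orbit xs ys n x0 :
  (forall m : Z, frac (snd (S_iter al r m (xs, ys))) <> 0) ->
  frac (x0 + INR n * al) = xs -> forall k : Z, ys + IZR k <> Defs.sigma al r n x0 0.
Proof.
  intros Horb Hfr k Hk; set (w := Int_part (x0 + INR n * al)).
  assert (Hfwd : Nat.iter n (S_map al r) (x0, 0) = translate w (IZR k) (xs, ys)).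
  { rewrite iter_S_map; unfold translate; simpl.
    f_equal; [unfold w; rewrite <- Hfr; unfold frac|]; lra. }
  pose proof (iter_S_inv_S_map n (x0, 0)) as Hback.
  rewrite Hfwd, (iter_commute _ _ _ _ (S_inv_translate w (IZR k))) in Hback.
  destruct (S_iter_neg n (xs, ys)) as [m Hm]; apply (Horb m); rewrite Hm.
  apply (f_equal snd) in Hback; unfold translate in Hback; simpl in Hback.
  replace (snd _) with (IZR (- k)) by (rewrite opp_IZR; lra); apply frac_IZR.
Qed.

Hypothesis Hrc : continuity r.

Lemma Un_cv_sigma n (xs : nat -> R) x0 :
  Un_cv xs x0 -> Un_cv (fun j => Defs.sigma al r n (xs j) 0) (Defs.sigma al r n x0 0).
Proof.
  intros Hx; induction n as [|n IH]; [unfold Defs.sigma; simpl; apply Un_cv_const|].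
  rewrite sigma_S.
  apply (Un_cv_eventually_eq _ (fun j => Defs.sigma al r n (xs j) 0 + r (xs j + INR n * al))).
  { apply eventually_always; intros j; apply sigma_S. }
  apply CV_plus; auto; apply (continuity_seq r (fun j => xs j + INR n * al)); auto.
  apply CV_plus; auto; apply Un_cv_const.
Qed.

Lemma cvT_sigma n (xs : nat -> R) x0 :
  cvT xs x0 -> Un_cv (fun j => Defs.sigma al r n (xs j) 0) (Defs.sigma al r n x0 0).
Proof.
  intros Hx; apply (Un_cv_eventually_eq _
    (fun j => Defs.sigma al r n (xs j - IZR (Int_part (xs j - x0 + / 2))) 0)).
  - apply eventually_always; intros j; unfold Rminus at 1; rewrite <- opp_IZR, sigma_add_IZR; auto.
  - apply Un_cv_sigma, Un_cv_round; auto.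
Qed.

End SkewProduct.

(** * Series with weights 2^-(n+1) *)

Definition wsum (a : nat -> R) (N : nat) : R := sum_f_R0 (fun n => (/ 2) ^ S n * a n) N.

Section WeightedSeries.

Variable a : nat -> R.
Hypothesis Ha : forall n, 0 <= a n <= 1.

Lemma wterm_bounds n : 0 <= (/ 2) ^ S n * a n <= (/ 2) ^ S n.
Proof.
  pose proof (pow_lt (/ 2) (S n) ltac:(lra)); specialize (Ha n).
  split; [apply Rmult_le_pos | rewrite <- (Rmult_1_r ((/ 2) ^ S n)) at 2;
    apply Rmult_le_compat_l]; lra.
Qed.

Lemma wsum_tail N i : 0 <= wsum a (N + i) - wsum a N <= (/ 2) ^ S N - (/ 2) ^ S (N + i).
Proof.
  induction i as [|i IH]; [rewrite Nat.add_0_r; lra|].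
  unfold wsum in *; rewrite Nat.add_succ_r, tech5.
  pose proof (wterm_bounds (S (N + i))).
  replace ((/ 2) ^ S (S (N + i))) with (/ 2 * (/ 2) ^ S (N + i)) in * by (simpl; ring); lra.
Qed.

Lemma series_spec : Un_cv (wsum a) (series (fun n => (/ 2) ^ S n * a n)).
Proof.
  unfold series; apply epsilon_spec.
  destruct (Rseries_CV_comp (fun n => (/ 2) ^ S n * a n) (fun n => 1 * (/ 2) ^ n)) as [l Hl].
  - intros n; pose proof (wterm_bounds n); simpl in *; lra.
  - exists (/ (1 - / 2)); apply GP_infinite; rewrite Rabs_right; lra.
  - now exists l.
Qed.

Lemma series_wsum_bounds N :
  wsum a N <= series (fun n => (/ 2) ^ S n * a n) <= wsum a N + (/ 2) ^ S N.
Proof.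
  split.
  - apply sum_incr; [apply series_spec | intros n; apply wterm_bounds].
  - apply (Rle_cv_lim (Un := fun i => wsum a (i + N)) (Vn := fun _ => wsum a N + (/ 2) ^ S N)).
    + intros i; rewrite Nat.add_comm; pose proof (wsum_tail N i).
      pose proof (pow_lt (/ 2) (S (N + i)) ltac:(lra)); lra.
    + apply CV_shift', series_spec.
    + apply Un_cv_const.
Qed.

End WeightedSeries.

Lemma squeezed_wsum (a : nat -> nat -> R) (b c : nat -> R) :
  (forall n, squeezed (fun j => a j n) (b n) (c n)) ->
  forall N, squeezed (fun j => wsum (a j) N) (wsum b N) (wsum c N).
Proof.
  intros Habc N; induction N as [|N IH];
    [|apply squeezed_plus; auto];
    apply squeezed_scale; auto; apply pow_lt; lra.
Qed.

Lemma squeezed_series (a : nat -> nat -> R) (b c : nat -> R) :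
  (forall j n, 0 <= a j n <= 1) -> (forall n, 0 <= b n <= 1) -> (forall n, 0 <= c n <= 1) ->
  (forall n, squeezed (fun j => a j n) (b n) (c n)) ->
  squeezed (fun j => series (fun n => (/ 2) ^ S n * a j n))
    (series (fun n => (/ 2) ^ S n * b n)) (series (fun n => (/ 2) ^ S n * c n)).
Proof.
  intros Ha Hb Hc Habc eps Heps.
  destruct (pow_lt_1_zero (/ 2) ltac:(rewrite Rabs_right; lra) (eps / 2) ltac:(lra)) as [N HN].
  specialize (HN (S N) ltac:(lia)); rewrite Rabs_right in HN by (apply Rle_ge, pow_le; lra).
  refine (eventually_mono _ _ _ (squeezed_wsum a b c Habc N (eps / 2) ltac:(lra))).
  intros j Hj; pose proof (series_wsum_bounds _ (Ha j) N).
  pose proof (series_wsum_bounds _ Hb N); pose proof (series_wsum_bounds _ Hc N); lra.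
Qed.

Lemma series_le_add (a b c : nat -> R) :
  (forall n, 0 <= a n <= 1) -> (forall n, 0 <= b n <= 1) -> (forall n, 0 <= c n <= 1) ->
  (forall n, a n <= b n + c n) ->
  series (fun n => (/ 2) ^ S n * a n) <=
    series (fun n => (/ 2) ^ S n * b n) + series (fun n => (/ 2) ^ S n * c n).
Proof.
  intros Ha Hb Hc Habc.
  apply (Rle_cv_lim (Un := wsum a) (Vn := fun N => wsum b N + wsum c N)).
  - intros N; unfold wsum; rewrite <- plus_sum; apply sum_Rle; intros n _.
    pose proof (pow_lt (/ 2) (S n) ltac:(lra)); specialize (Habc n); nra.
  - apply series_spec; auto.
  - apply CV_plus; apply series_spec; auto.
Qed.

(** * The measures mu^n_x and mu_x *)

Section Measures.

Variables (al : R) (r : R -> R) (xb1 xb2 x1s y1s : R) (psi phi : R -> R).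
Hypotheses (Hrc : continuity r) (Hrper : forall x, r (x + 1) = r x)
  (Hxb : xb1 < x1s < xb2) (Hxb0 : 0 < xb1) (Hxb12 : xb2 < 1/2)
  (Hpsic : cont_on xb1 xb2 psi) (Hphic : cont_on xb1 xb2 phi)
  (Hpsir : forall x, xb1 <= x <= xb2 -> 0 <= psi x <= 1)
  (Hphir : forall x, xb1 <= x <= xb2 -> 0 <= phi x <= 1)
  (Hpsi1 : psi xb1 = 0) (Hphi1 : phi xb1 = 1) (Hpsi2 : psi xb2 = 1) (Hphi2 : phi xb2 = 0)
  (Hlt : forall x, xb1 <= x < x1s -> psi x < phi x)
  (Hgt : forall x, x1s < x <= xb2 -> psi x > phi x)
  (Heq : psi x1s = phi x1s) (Heqy : frac (psi x1s) = frac y1s)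
  (Horb1 : forall m : Z, frac (snd (S_iter al r m (x1s, y1s))) <> 0)
  (Horb2 : forall m : Z, frac (snd (S_iter al r m (x1s + 1/2, 1 - y1s))) <> 0).

Let mun := mun al r xb1 xb2 x1s y1s psi phi.
Let mu := mu al r xb1 xb2 x1s y1s psi phi.

Lemma mun_bounds n x A : 0 <= lam A <= 1 -> 0 <= mun n x A <= 1.
Proof. intros HA; unfold mun, Defs.mun; eapply mu0_bounds; eauto; unfold lam in *; simpl; lra. Qed.

Lemma mun_split n x y : 0 <= y <= 1 -> mun n x (cc 0 y) <= mun n x (co 0 y) + mun n x (cc y y).
Proof.
  intros Hy; unfold mun, Defs.mun; eapply mu0_subadd; eauto; unfold lam; simpl; try lra.
  intros q [k [H1 H2]]; simpl in *.
  destruct (Req_dec (q + IZR k) (y + Defs.sigma al r n x 0)); [right|left]; exists k; simpl; lra.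
Qed.

Lemma mun_squeezed n (xs ys : nat -> R) x0 y0 :
  cvT xs x0 -> Un_cv ys y0 -> (forall j, 0 <= ys j <= 1) -> 0 <= y0 <= 1 ->
  squeezed (fun j => mun n (xs j) (cc 0 (ys j))) (mun n x0 (co 0 y0)) (mun n x0 (cc 0 y0)).
Proof.
  intros Hx Hy Hys Hy0; pose proof (cvT_sigma al r Hrper Hrc n xs x0 Hx) as Hsig.
  unfold mun, Defs.mun, shift; simpl.
  eapply mu0_squeezed; eauto.
  - apply cvT_add_const; auto.
  - apply CV_plus; auto; apply Un_cv_const.
  - apply CV_plus; auto.
  - intros j; specialize (Hys j); lra.
  - lra.
  - intros Hfr k; rewrite Rplus_0_l; apply (sigma_avoids_orbit al r Hrper x1s); auto.
  - intros Hfr k; rewrite Rplus_0_l; apply (sigma_avoids_orbit al r Hrper (x1s + 1/2)); auto.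
Qed.

Lemma mu_squeezed (xs ys : nat -> R) x0 y0 :
  cvT xs x0 -> Un_cv ys y0 -> (forall j, 0 <= ys j <= 1) -> 0 <= y0 <= 1 ->
  squeezed (fun j => mu (xs j) (cc 0 (ys j))) (mu x0 (co 0 y0)) (mu x0 (cc 0 y0)).
Proof.
  intros Hx Hy Hys Hy0; unfold mu, Defs.mu.
  apply squeezed_scale; [lra|]; apply squeezed_plus.
  - apply squeezed_of_Un_cv; unfold lam; simpl; apply CV_minus; auto; apply Un_cv_const.
  - apply squeezed_series; [intros j n | intros n | intros n | intros n; apply mun_squeezed; auto];
      apply mun_bounds; unfold lam; simpl; try specialize (Hys j); lra.
Qed.

Lemma mu_split x y : 0 <= y <= 1 -> mu x (cc 0 y) <= mu x (co 0 y) + mu x (cc y y).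
Proof.
  intros Hy; unfold mu, Defs.mu.
  assert (Hle : series (fun n => (/ 2) ^ S n * mun n x (cc 0 y)) <=
    series (fun n => (/ 2) ^ S n * mun n x (co 0 y)) +
    series (fun n => (/ 2) ^ S n * mun n x (cc y y))).
  { apply series_le_add; intros n; try apply mun_split; auto;
      apply mun_bounds; unfold lam; simpl; lra. }
  unfold mun in Hle; unfold lam; cbn [a_lo a_hi cc co]; lra.
Qed.

End Measures.

Theorem corollary3
  (al : R) (r : R -> R) (xb1 xb2 x1s y1s : R) (psi phi : R -> R)
  (* alpha irrational *)
  (Hal : forall p q : Z, q <> 0%Z -> al <> IZR p / IZR q)
  (* r : T^1 -> R continuous *)
  (Hrc : continuity r) (Hrper : forall x, r (x + 1) = r x)
  (Hrodd : forall x, r (x + 1/2) = - r x)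
  (Hr0 : r 0 = 0) (Hr12 : r (1/2) = 0)
  (Hrpos : forall x, 0 < x < 1/2 -> 0 < r x < 1/4)
  (* S minimal: every (full) orbit is dense in T^2 *)
  (Hmin : forall x y u v eps, eps > 0 -> exists m : Z,
      distT (fst (S_iter al r m (x, y))) u < eps /\
      distT (snd (S_iter al r m (x, y))) v < eps)
  (* x1s rational in (0.1,0.2) *)
  (Hx1q : exists p q : Z, q <> 0%Z /\ x1s = IZR p / IZR q)
  (Hx1 : 1/10 < x1s < 2/10)
  (* orbit condition for z1 = (x1s,y1s) and z2 = (x1s+1/2, 1-y1s) *)
  (Horb : forall (m : Z) (z : R * R), z = (x1s, y1s) \/ z = (x1s + 1/2, 1 - y1s) ->
      frac (snd (S_iter al r m z)) <> 0 /\
      frac (snd (S_iter al r m z) + r (fst (S_iter al r m z))) <> 0)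
  (Hxb : xb1 < x1s < xb2) (Hxb0 : 0 < xb1) (Hxb12 : xb2 < 1/2)
  (Hpsic : cont_on xb1 xb2 psi) (Hphic : cont_on xb1 xb2 phi)
  (Hpsir : forall x, xb1 <= x <= xb2 -> 0 <= psi x <= 1)
  (Hphir : forall x, xb1 <= x <= xb2 -> 0 <= phi x <= 1)
  (Hpsi1 : psi xb1 = 0) (Hphi1 : phi xb1 = 1)
  (Hpsi2 : psi xb2 = 1) (Hphi2 : phi xb2 = 0)
  (Hlt : forall x, xb1 <= x < x1s -> psi x < phi x)
  (Hgt : forall x, x1s < x <= xb2 -> psi x > phi x)
  (Heq : psi x1s = phi x1s) (Heqy : frac (psi x1s) = frac y1s) :
  (forall (xs ys : nat -> R) (x0 y0 : R),
      cvT xs x0 -> Un_cv ys y0 ->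
      (forall j, 0 <= ys j <= 1) -> 0 <= y0 <= 1 ->
      (forall n : nat,
        let u := fun j => mun al r xb1 xb2 x1s y1s psi phi n (xs j) (cc 0 (ys j)) in
        liminf_ge u (mun al r xb1 xb2 x1s y1s psi phi n x0 (co 0 y0)) /\
        liminf_le_limsup u /\
        limsup_le u (mun al r xb1 xb2 x1s y1s psi phi n x0 (cc 0 y0))) /\
      (let u := fun j => mu al r xb1 xb2 x1s y1s psi phi (xs j) (cc 0 (ys j)) in
        liminf_ge u (mu al r xb1 xb2 x1s y1s psi phi x0 (co 0 y0)) /\
        liminf_le_limsup u /\
        limsup_le u (mu al r xb1 xb2 x1s y1s psi phi x0 (cc 0 y0)))) /\
  (forall x0 y0 : R, 0 <= y0 <= 1 ->
      ~ cont2_at (fun x y => mu al r xb1 xb2 x1s y1s psi phi x (cc 0 y)) x0 y0 ->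
      mu al r xb1 xb2 x1s y1s psi phi x0 (cc y0 y0) > 0).
Proof.
  assert (Horb1 : forall m : Z, frac (snd (S_iter al r m (x1s, y1s))) <> 0)
    by (intros m; apply (Horb m (x1s, y1s)); auto).
  assert (Horb2 : forall m : Z, frac (snd (S_iter al r m (x1s + 1/2, 1 - y1s))) <> 0)
    by (intros m; apply (Horb m (x1s + 1/2, 1 - y1s)); auto).
  split.
  - intros xs ys x0 y0 Hx Hy Hys Hy0; split; [intros n|]; cbv zeta; apply squeezed_liminf_limsup.
    + apply mun_squeezed; auto.
    + apply mu_squeezed; auto.
  - intros x0 y0 Hy0 Hdisc; apply Rnot_le_lt; intros Hatom; apply Hdisc.
    apply cont2_at_of_squeezed; intros xs ys Hx Hy Hys; cbv beta.
    eapply squeezed_weaken; [apply mu_squeezed; eauto | | apply Rle_refl].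
    eapply Rle_trans; [apply mu_split; auto | lra].
Qed.
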